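(* For every classical type $A$ of $\lambda_Q$, $\flat[\![A]\!]\simeq[\![A]\!]$, i.e. $[\![\flat[\![A]\!]]\!]=[\![[\![A]\!]]\!]$.
   Context: Classical types of $\lambda_Q$: $A,B::=\mathbb U\mid A\to B\mid A\times B\mid\mathsf{bit}\mid A_Q\multimap B_Q$, with quantum types $A_Q,B_Q::=\mathsf{qbit}\mid A_Q\otimes B_Q$. Their translation into unitary types: $[\![\mathsf{bit}]\!]=\mathbb U+\mathbb U$, $[\![\mathbb U]\!]=\mathbb U$, $[\![A\times B]\!]=[\![A]\!]\times[\![B]\!]$, $[\![A\to B]\!]=[\![A]\!]\rightarrow[\![B]\!]$, $[\![A_Q\multimap B_Q]\!]=\mathbb U\rightarrow([\![A_Q]\!]\Rightarrow[\![B_Q]\!])$, $[\![\mathsf{qbit}]\!]=\sharp(\mathbb U+\mathbb U)$, $[\![A_Q\otimes B_Q]\!]=\sharp([\![A_Q]\!]\times[\![B_Q]\!])$. Unitary types are interpreted in a linear-algebraic lambda-calculus (pure values $v::=x\mid\lambda x.\vec s\mid *\mid(v_1,v_2)\mid\mathtt{inl}(v)\mid\mathtt{inr}(v)$; distributions are formal $\mathbb C$-combinations of pure terms modulo the weak-vector-space congruence, with canonical forms $\sum_i\alpha_iv_i$ with distinct $v_i$, domain $\{v_i\}$; pairs/inl/inr extended (bi)linearly) as sets of closed value distributions of norm $1$ ($\|\sum_i\alpha_iv_i\|^2=\sum_i|\alpha_i|^2$, unit sphere $\mathcal S$): $[\![\mathbb U]\!]=\{*\}$, $[\![\flat A]\!]=\bigcup_{\vec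 v\in[\![A]\!]}\mathrm{dom}(\vec v)$, $[\![\sharp A]\!]=\mathrm{Span}([\![A]\!])\cap\mathcal S$, $[\![A+B]\!]=\{\mathtt{inl}(\vec v):\vec v\in[\![A]\!]\}\cup\{\mathtt{inr}(\vec w):\vec w\in[\![B]\!]\}$, $[\![A\times B]\!]=\{(\vec v,\vec w):\vec v\in[\![A]\!],\vec w\in[\![B]\!]\}$, $[\![A\rightarrow B]\!]=\{\lambda x.\vec t\ \text{closed}:\forall\vec v\in[\![A]\!],\ \vec t\langle x:=\vec v\rangle\Vdash B\}$, $[\![A\Rightarrow B]\!]=\{(\sum_i\alpha_i\lambda x.\vec t_i)\in\mathcal S:\forall\vec v\in[\![A]\!],\ \sum_i\alpha_i\vec t_i\langle x:=\vec v\rangle\Vdash B\}$ (bilinear substitution $\vec t\langle x:=\sum_j\beta_jw_j\rangle=\sum_j\beta_j\vec t[x:=w_j]$; $\Vdash B$ means evaluating, under linear call-by-value evaluation, to an element of $[\![B]\!]$). $A\simeq B$ means the two unitary types have the same semantics. *)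

From Stdlib Require Import Reals List Permutation.
From Coquelicot Require Import Complex.
Import ListNotations.
Open Scope R_scope.

Definition c_one : C := RtoC 1.

(** Pure terms, with de Bruijn indices (so terms are taken modulo alpha).
    Term distributions are formal combinations [list (C * term)], taken
    modulo the congruence [deq] below.  Binders: [Lam] binds index 0 in its
    body; [Match s t1 t2] binds index 0 in each branch;
    [LetP s t] (let (x1,x2) = s in t) binds x2 as index 0 and x1 as index 1. *)
Inductive term : Type :=
| Var : nat -> term
| Lam : list (C * term) -> term
| App : term -> term -> term
| Unit : term
| Seq : term -> term -> term
| Pair : term -> term -> term
| Inl : term -> term
| Inr : term -> term
| Match : term -> list (C * term) -> list (C * term) -> term
| LetP : term -> list (C * term) -> term.

Definition dist := list (C * term).

Fixpoint closed_at (n : nat) (t : term) : Prop :=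
  match t with
  | Var k => (k < n)%nat
  | Lam d => (fix cd (n : nat) (d : list (C * term)) : Prop :=
                match d with [] => True | (_, u) :: r => closed_at n u /\ cd n r end) (S n) d
  | App s u | Seq s u | Pair s u => closed_at n s /\ closed_at n u
  | Unit => True
  | Inl s | Inr s => closed_at n s
  | Match s d1 d2 =>
      closed_at n s /\
      (fix cd (n : nat) (d : list (C * term)) : Prop :=
         match d with [] => True | (_, u) :: r => closed_at n u /\ cd n r end) (S n) d1 /\
      (fix cd (n : nat) (d : list (C * term)) : Prop :=
         match d with [] => True | (_, u) :: r => closed_at n u /\ cd n r end) (S n) d2
  | LetP s d =>
      closed_at n s /\
      (fix cd (n : nat) (d : list (C * term)) : Prop :=
         match d with [] => True | (_, u) :: r => closed_at n u /\ cd n r end) (S (S n)) d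
  end.

Definition closed (t : term) : Prop := closed_at 0 t.
Definition closed_dist (d : dist) : Prop := Forall (fun p => closed (snd p)) d.

Fixpoint is_value (t : term) : Prop :=
  match t with
  | Var _ | Lam _ | Unit => True
  | Pair v w => is_value v /\ is_value w
  | Inl v | Inr v => is_value v
  | _ => False
  end.

(** substitution of a (closed) pure term [v] for index [k] *)
Fixpoint subst (k : nat) (v : term) (t : term) : term :=
  match t with
  | Var n => if Nat.eqb n k then v else if Nat.ltb k n then Var (pred n) else Var n
  | Lam d => Lam ((fix sd (k : nat) (d : list (C * term)) :=
                    match d with [] => [] | (a, u) :: r => (a, subst k v u) :: sd k r end) (S k) d)
  | App s u => App (subst k v s) (subst k v u)
  | Unit => Unit
  | Seq s u => Seq (subst k v s) (subst k v u)
  | Pair s u => Pair (subst k v s) (subst k v u)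
  | Inl s => Inl (subst k v s)
  | Inr s => Inr (subst k v s)
  | Match s d1 d2 =>
      Match (subst k v s)
        ((fix sd (k : nat) (d : list (C * term)) :=
            match d with [] => [] | (a, u) :: r => (a, subst k v u) :: sd k r end) (S k) d1)
        ((fix sd (k : nat) (d : list (C * term)) :=
            match d with [] => [] | (a, u) :: r => (a, subst k v u) :: sd k r end) (S k) d2)
  | LetP s d =>
      LetP (subst k v s)
        ((fix sd (k : nat) (d : list (C * term)) :=
            match d with [] => [] | (a, u) :: r => (a, subst k v u) :: sd k r end) (S (S k)) d)
  end.

Definition dmap (f : term -> term) (d : dist) : dist :=
  map (fun p => (fst p, f (snd p))) d.
Definition scale (a : C) (d : dist) : dist :=
  map (fun p => (Cmult a (fst p), snd p)) d.
Definition dinl (d : dist) : dist := dmap Inl d.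
Definition dinr (d : dist) : dist := dmap Inr d.
Definition dpair (d1 d2 : dist) : dist :=
  flat_map (fun p => map (fun q => (Cmult (fst p) (fst q), Pair (snd p) (snd q))) d2) d1.
Definition lincomb (l : list (C * dist)) : dist :=
  flat_map (fun p => scale (fst p) (snd p)) l.
Definition dsubst (k : nat) (w : term) (d : dist) : dist := dmap (subst k w) d.
(** bilinear substitution  t<x := sum_j beta_j w_j> = sum_j beta_j t[x := w_j]
    (body of a lambda, x = index 0) *)
Definition bsubst (body arg : dist) : dist :=
  flat_map (fun p => scale (fst p) (dsubst 0 (snd p) body)) arg.

(** the weak-vector-space congruence (no rule 0.t = 0), on pure terms
    ([teq]) and on distributions ([deq]) *)
Inductive teq : term -> term -> Prop :=
| teq_refl t : teq t t
| teq_sym t u : teq t u -> teq u t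
| teq_trans t u w : teq t u -> teq u w -> teq t w
| teq_Lam d d' : deq d d' -> teq (Lam d) (Lam d')
| teq_App s s' t t' : teq s s' -> teq t t' -> teq (App s t) (App s' t')
| teq_Seq s s' t t' : teq s s' -> teq t t' -> teq (Seq s t) (Seq s' t')
| teq_Pair s s' t t' : teq s s' -> teq t t' -> teq (Pair s t) (Pair s' t')
| teq_Inl s s' : teq s s' -> teq (Inl s) (Inl s')
| teq_Inr s s' : teq s s' -> teq (Inr s) (Inr s')
| teq_Match s s' d1 d1' d2 d2' :
    teq s s' -> deq d1 d1' -> deq d2 d2' -> teq (Match s d1 d2) (Match s' d1' d2')
| teq_LetP s s' d d' : teq s s' -> deq d d' -> teq (LetP s d) (LetP s' d')
with deq : dist -> dist -> Prop :=
| deq_refl d : deq d d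
| deq_sym d e : deq d e -> deq e d
| deq_trans d e f : deq d e -> deq e f -> deq d f
| deq_perm d e : Permutation d e -> deq d e
| deq_cons a t t' r r' : teq t t' -> deq r r' -> deq ((a, t) :: r) ((a, t') :: r')
| deq_merge a b t r : deq ((a, t) :: (b, t) :: r) ((Cplus a b, t) :: r).

Definition canonical_form (d c : dist) : Prop :=
  deq d c /\ ForallOrdPairs (fun p q => ~ teq (snd p) (snd q)) c.

Definition in_dom (v : term) (d : dist) : Prop :=
  exists c, canonical_form d c /\ exists a t, In (a, t) c /\ teq v t.

Definition sqnorm (c : dist) : R :=
  fold_right (fun p acc => (Cmod (fst p)) ^ 2 + acc) 0 c.
Definition in_S (d : dist) : Prop :=
  exists c, canonical_form d c /\ sqnorm c = 1.

(** linear call-by-value (left-to-right) reduction.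
    [pstep t d]: pure term t reduces to distribution d; evaluation contexts
    are extended linearly. *)
Inductive pstep : term -> dist -> Prop :=
| ps_beta d v : is_value v -> pstep (App (Lam d) v) (dsubst 0 v d)
| ps_seq s : pstep (Seq Unit s) [(c_one, s)]
| ps_let v w d : is_value v -> is_value w ->
    pstep (LetP (Pair v w) d) (dsubst 0 v (dsubst 0 w d))
| ps_match_inl v d1 d2 : is_value v -> pstep (Match (Inl v) d1 d2) (dsubst 0 v d1)
| ps_match_inr v d1 d2 : is_value v -> pstep (Match (Inr v) d1 d2) (dsubst 0 v d2)
| ps_appL s e t : pstep s e -> pstep (App s t) (dmap (fun u => App u t) e)
| ps_appR v t e : is_value v -> pstep t e -> pstep (App v t) (dmap (App v) e)
| ps_seqC t e s : pstep t e -> pstep (Seq t s) (dmap (fun u => Seq u s) e)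
| ps_pairL s e t : pstep s e -> pstep (Pair s t) (dmap (fun u => Pair u t) e)
| ps_pairR v t e : is_value v -> pstep t e -> pstep (Pair v t) (dmap (Pair v) e)
| ps_inl s e : pstep s e -> pstep (Inl s) (dmap Inl e)
| ps_inr s e : pstep s e -> pstep (Inr s) (dmap Inr e)
| ps_matchC s e d1 d2 : pstep s e -> pstep (Match s d1 d2) (dmap (fun u => Match u d1 d2) e)
| ps_letC s e d : pstep s e -> pstep (LetP s d) (dmap (fun u => LetP u d) e).

Definition dstep (d d' : dist) : Prop :=
  exists a t r e, deq d ((a, t) :: r) /\ pstep t e /\ deq d' (scale a e ++ r).

Inductive dsteps : dist -> dist -> Prop :=
| dsteps_refl d : dsteps d d
| dsteps_step d e f : dstep d e -> dsteps e f -> dsteps d f.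

Inductive utype : Type :=
| UUnit : utype
| UFlat : utype -> utype
| USharp : utype -> utype
| USum : utype -> utype -> utype
| UProd : utype -> utype -> utype
| UArr : utype -> utype -> utype
| ULArr : utype -> utype -> utype.

(** realizability semantics: sets of closed value distributions
    (congruence-closed predicates on [dist]).  "t |- B" is
    [exists w, dsteps t w /\ sem B w]. *)
Fixpoint sem (A : utype) : dist -> Prop :=
  match A with
  | UUnit => fun d => deq d [(c_one, Unit)]
  | UFlat A => fun d => exists e, sem A e /\ exists v, in_dom v e /\ deq d [(c_one, v)]
  | USharp A => fun d =>
      in_S d /\ exists l : list (C * dist), Forall (fun p => sem A (snd p)) l /\ deq d (lincomb l)
  | USum A B => fun d =>
      (exists e, sem A e /\ deq d (dinl e)) \/ (exists e, sem B e /\ deq d (dinr e))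
  | UProd A B => fun d => exists e f, sem A e /\ sem B f /\ deq d (dpair e f)
  | UArr A B => fun d =>
      exists t, closed (Lam t) /\ deq d [(c_one, Lam t)] /\
        forall e, sem A e -> exists w, dsteps (bsubst t e) w /\ sem B w
  | ULArr A B => fun d =>
      in_S d /\
      exists l : list (C * dist),
        closed_dist (map (fun p => (fst p, Lam (snd p))) l) /\
        deq d (map (fun p => (fst p, Lam (snd p))) l) /\
        forall e, sem A e ->
          exists w, dsteps (flat_map (fun p => scale (fst p) (bsubst (snd p) e)) l) w /\ sem B w
  end.

Definition usim (A B : utype) : Prop := forall d, sem A d <-> sem B d.

Inductive qtype : Type :=
| QBit : qtype
| QTensor : qtype -> qtype -> qtype.

Inductive ctype : Type :=
| CUnit : ctype
| CArr : ctype -> ctype -> ctype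
| CProd : ctype -> ctype -> ctype
| CBit : ctype
| CLolli : qtype -> qtype -> ctype.

Fixpoint qtrans (Q : qtype) : utype :=
  match Q with
  | QBit => USharp (USum UUnit UUnit)
  | QTensor A B => USharp (UProd (qtrans A) (qtrans B))
  end.

Fixpoint ctrans (A : ctype) : utype :=
  match A with
  | CUnit => UUnit
  | CArr A B => UArr (ctrans A) (ctrans B)
  | CProd A B => UProd (ctrans A) (ctrans B)
  | CBit => USum UUnit UUnit
  | CLolli A B => UArr UUnit (ULArr (qtrans A) (qtrans B))
  end.

From Stdlib Require Import List Permutation.
From Coquelicot Require Import Complex.
Import ListNotations.

(* The translation of a classical type denotes only Dirac distributions
   [1 * w]: the unit, the booleans [inl *] and [inr *], pairs (by bilinearity
   of pairing) and lambda-abstractions.  The domain of a Dirac distribution is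
   its single value, up to the congruence, and every semantic type is closed
   under the congruence; hence flattening a classical type changes nothing. *)

Lemma deq_app_l d d' e : deq d d' -> deq (d ++ e) (d' ++ e).
Proof.
  intro H; induction H; simpl.
  - apply deq_refl.
  - now apply deq_sym.
  - eapply deq_trans; eauto.
  - apply deq_perm. now apply Permutation_app_tail.
  - now apply deq_cons.
  - apply deq_merge.
Qed.

Lemma deq_app_r d e e' : deq e e' -> deq (d ++ e) (d ++ e').
Proof.
  intro H; induction d as [|[a t] d IH]; simpl; auto.
  apply deq_cons; [apply teq_refl | exact IH].
Qed.

Lemma deq_app d d' e e' : deq d d' -> deq e e' -> deq (d ++ e) (d' ++ e').
Proof.
  intros Hd He. eapply deq_trans; [apply deq_app_l, Hd | apply deq_app_r, He].
Qed.

Lemma deq_map_additive (phi : C -> C) (F : term -> term) :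
  (forall a b, phi (Cplus a b) = Cplus (phi a) (phi b)) ->
  (forall t t', teq t t' -> teq (F t) (F t')) ->
  forall d d', deq d d' ->
  deq (map (fun p => (phi (fst p), F (snd p))) d)
      (map (fun p => (phi (fst p), F (snd p))) d').
Proof.
  intros Hphi HF d d' H; induction H; simpl.
  - apply deq_refl.
  - now apply deq_sym.
  - eapply deq_trans; eauto.
  - apply deq_perm. now apply Permutation_map.
  - apply deq_cons; auto.
  - rewrite Hphi. apply deq_merge.
Qed.

Lemma deq_dmap (F : term -> term) :
  (forall t t', teq t t' -> teq (F t) (F t')) ->
  forall d d', deq d d' -> deq (dmap F d) (dmap F d').
Proof.
  intros HF. exact (deq_map_additive (fun a => a) F (fun _ _ => eq_refl) HF).
Qed.

Lemma dpair_cons a t e f : dpair ((a, t) :: e) f = dpair [(a, t)] f ++ dpair e f.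
Proof. unfold dpair; simpl; now rewrite app_nil_r. Qed.

Lemma dpair_merge a b t f :
  deq (dpair [(a, t)] f ++ dpair [(b, t)] f) (dpair [(Cplus a b, t)] f).
Proof.
  unfold dpair; simpl; rewrite !app_nil_r.
  induction f as [|[c u] f IH]; simpl.
  - apply deq_refl.
  - eapply deq_trans.
    + apply deq_perm, perm_skip, Permutation_sym, Permutation_middle.
    + eapply deq_trans; [apply deq_merge |].
      rewrite <- Cmult_plus_distr_r. apply deq_cons; [apply teq_refl | exact IH].
Qed.

Lemma dpair_deq_l e e' f : deq e e' -> deq (dpair e f) (dpair e' f).
Proof.
  intro H; induction H as [| | | e e' Hp | a t t' r r' Ht _ IH | a b t r].
  - apply deq_refl.
  - now apply deq_sym.
  - eapply deq_trans; eauto.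
  - apply deq_perm. now apply Permutation_flat_map.
  - rewrite (dpair_cons a t r), (dpair_cons a t' r'). apply deq_app; [| exact IH].
    unfold dpair; simpl; clear IH.
    induction f as [|[b u] f IHf]; simpl; [apply deq_refl |].
    apply deq_cons; [apply teq_Pair; [exact Ht | apply teq_refl] | exact IHf].
  - rewrite (dpair_cons a t), (dpair_cons b t), (dpair_cons (Cplus a b) t), app_assoc.
    apply deq_app_l, dpair_merge.
Qed.

Lemma dpair_deq_r e f f' : deq f f' -> deq (dpair e f) (dpair e f').
Proof.
  intro H; induction e as [|[a t] e IH]; unfold dpair in *; simpl.
  - apply deq_refl.
  - apply deq_app; [| exact IH].
    apply (deq_map_additive (Cmult a) (Pair t)); [apply Cmult_plus_distr_l | | exact H].
    intros; apply teq_Pair; [apply teq_refl | assumption].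
Qed.

Lemma dpair_deq e e' f f' : deq e e' -> deq f f' -> deq (dpair e f) (dpair e' f').
Proof.
  intros He Hf. eapply deq_trans; [apply dpair_deq_l, He | apply dpair_deq_r, Hf].
Qed.

Definition supp_sub (d d' : dist) : Prop :=
  forall a t, In (a, t) d -> exists b u, In (b, u) d' /\ teq t u.

Lemma supp_sub_refl d : supp_sub d d.
Proof. intros a t Hin; exists a, t; split; [exact Hin | apply teq_refl]. Qed.

Lemma supp_sub_trans d e f : supp_sub d e -> supp_sub e f -> supp_sub d f.
Proof.
  intros Hde Hef a t Hin.
  destruct (Hde _ _ Hin) as (b & u & Hu & Htu).
  destruct (Hef _ _ Hu) as (c & w & Hw & Huw).
  exists c, w; split; [exact Hw | eapply teq_trans; eauto].
Qed.

Lemma supp_sub_cons a t t' r r' :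
  teq t t' -> supp_sub r r' -> supp_sub ((a, t) :: r) ((a, t') :: r').
Proof.
  intros Ht Hr b u [Heq | Hin].
  - injection Heq as <- <-. exists a, t'; split; [left; reflexivity | exact Ht].
  - destruct (Hr _ _ Hin) as (c & w & Hw & Huw). exists c, w; split; [right; exact Hw | exact Huw].
Qed.

Lemma supp_sub_incl d d' : incl d d' -> supp_sub d d'.
Proof. intros Hincl a t Hin; exists a, t; split; [apply Hincl, Hin | apply teq_refl]. Qed.

Lemma deq_supp_sub d d' : deq d d' -> supp_sub d d' /\ supp_sub d' d.
Proof.
  intro H; induction H as [d | d e _ [IH IH'] | d e f _ [IH1 IH1'] _ [IH2 IH2']
                          | d e Hp | a t t' r r' Ht _ [IH IH'] | a b t r].
  - split; apply supp_sub_refl.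
  - split; assumption.
  - split; eapply supp_sub_trans; eauto.
  - split; apply supp_sub_incl; intros p Hin.
    + exact (Permutation_in p Hp Hin).
    + exact (Permutation_in p (Permutation_sym Hp) Hin).
  - split; apply supp_sub_cons; auto. now apply teq_sym.
  - split; intros c u Hin; simpl in Hin.
    + destruct Hin as [Heq | [Heq | Hin]].
      1, 2: injection Heq as _ <-; exists (Cplus a b), t; split; [left; reflexivity | apply teq_refl].
      exists c, u; split; [right; exact Hin | apply teq_refl].
    + destruct Hin as [Heq | Hin].
      * injection Heq as _ <-. exists a, t; split; [left; reflexivity | apply teq_refl].
      * exists c, u; split; [right; right; exact Hin | apply teq_refl].
Qed.

Lemma canonical_form_deq d d' c : deq d d' -> canonical_form d c -> canonical_form d' c.
Proof. intros Hdd [Hdc Hc]. split; [eapply deq_trans; [apply deq_sym, Hdd | exact Hdc] | exact Hc]. Qed.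

Lemma in_S_deq d d' : deq d d' -> in_S d -> in_S d'.
Proof. intros Hdd (c & Hc & Hn). exists c; split; [eapply canonical_form_deq; eauto | exact Hn]. Qed.

Lemma in_dom_deq v d d' : deq d d' -> in_dom v d -> in_dom v d'.
Proof. intros Hdd (c & Hc & Hv). exists c; split; [eapply canonical_form_deq; eauto | exact Hv]. Qed.

Lemma in_dom_dirac a w : in_dom w [(a, w)].
Proof.
  exists [(a, w)]; split.
  - split; [apply deq_refl | repeat constructor].
  - exists a, w; split; [left; reflexivity | apply teq_refl].
Qed.

Lemma in_dom_dirac_inv v a w : in_dom v [(a, w)] -> teq v w.
Proof.
  intros (c & [Hc _] & b & t & Hin & Hvt).
  destruct (proj2 (deq_supp_sub _ _ Hc) _ _ Hin) as (b' & u & [Heq | []] & Htu).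
  injection Heq as _ <-. eapply teq_trans; eauto.
Qed.

Lemma sem_deq (A : utype) d d' : deq d d' -> sem A d -> sem A d'.
Proof.
  intros Hdd Hd.
  assert (Hback : forall e, deq d e -> deq d' e) by (intros e; apply deq_trans, deq_sym, Hdd).
  destruct A; simpl in *.
  - now apply Hback.
  - destruct Hd as (e & He & v & Hv & H). exists e; split; [exact He |]. exists v; auto.
  - destruct Hd as (HS & l & Hl & H). split; [eapply in_S_deq; eauto |]. exists l; auto.
  - destruct Hd as [(e & He & H) | (e & He & H)]; [left | right]; exists e; auto.
  - destruct Hd as (e & f & He & Hf & H). exists e, f; auto.
  - destruct Hd as (t & Hc & H & Ht). exists t; auto.
  - destruct Hd as (HS & l & Hc & H & Hl). split; [eapply in_S_deq; eauto |]. exists l; auto.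
Qed.

Lemma dpair_dirac a v b w : dpair [(a, v)] [(b, w)] = [(Cmult a b, Pair v w)].
Proof. reflexivity. Qed.

Lemma sem_ctrans_dirac (A : ctype) d : sem (ctrans A) d -> exists w, deq d [(c_one, w)].
Proof.
  revert d; induction A as [| A1 _ A2 _ | A1 IH1 A2 IH2 | |]; intros d Hd; simpl in Hd.
  - exists Unit; exact Hd.
  - destruct Hd as (t & _ & H & _). exists (Lam t); exact H.
  - destruct Hd as (e & f & He & Hf & H).
    destruct (IH1 _ He) as [w1 H1], (IH2 _ Hf) as [w2 H2].
    exists (Pair w1 w2). eapply deq_trans; [exact H |].
    pose proof (dpair_deq _ _ _ _ H1 H2) as Hp.
    rewrite dpair_dirac in Hp. unfold c_one in *. now rewrite Cmult_1_l in Hp.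
  - destruct Hd as [(e & He & H) | (e & He & H)].
    + exists (Inl Unit). eapply deq_trans; [exact H |].
      exact (deq_dmap Inl teq_Inl _ _ He).
    + exists (Inr Unit). eapply deq_trans; [exact H |].
      exact (deq_dmap Inr teq_Inr _ _ He).
  - destruct Hd as (t & _ & H & _). exists (Lam t); exact H.
Qed.

Theorem lemma6 (A : ctype) : usim (UFlat (ctrans A)) (ctrans A).
Proof.
  intro d; simpl; split.
  - intros (e & He & v & Hv & Hd).
    destruct (sem_ctrans_dirac A e He) as [w Hw].
    assert (Hvw : teq v w) by (eapply in_dom_dirac_inv, in_dom_deq; eauto).
    apply (sem_deq _ e); [| exact He].
    eapply deq_trans; [exact Hw |]. apply deq_sym.
    eapply deq_trans; [exact Hd | apply deq_cons; [exact Hvw | apply deq_refl]].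
  - intro Hd. destruct (sem_ctrans_dirac A d Hd) as [w Hw].
    exists d; split; [exact Hd |]. exists w; split; [| exact Hw].
    apply (in_dom_deq _ _ _ (deq_sym _ _ Hw)), in_dom_dirac.
Qed.
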